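(* Let $L$ be an infinite dimensional Lie algebra over a field $F$ generated by elements $a_1,\dots,a_m$ such that every element of the Lie set $S\langle a_1,\dots,a_m\rangle$ is ad-nilpotent. Then $L$ has a just infinite homomorphic image.
   Context: An element $a\in L$ is ad-nilpotent if $\operatorname{ad}(a):x\mapsto[x,a]$ is nilpotent. $S\langle a_1,\dots,a_m\rangle$ is the smallest subset containing the $a_i$ and closed under the bracket. An algebra is just infinite if it is infinite dimensional but every nonzero ideal has finite codimension. *)

From HB Require Import structures.
From mathcomp Require Import all_boot all_order all_algebra.
Set Implicit Arguments. Unset Strict Implicit. Unset Printing Implicit Defensive.
Import GRing.Theory.
Local Open Scope ring_scope.

Section Lie.
Variable F : fieldType.

Definition is_lie (V : lmodType F) (br : V -> V -> V) : Prop :=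
  [/\ (forall (a : F) (x y z : V), br (a *: x + y) z = a *: br x z + br y z),
      (forall (a : F) (x y z : V), br z (a *: x + y) = a *: br z x + br z y),
      (forall x : V, br x x = 0) &
      (forall x y z : V, br x (br y z) + br y (br z x) + br z (br x y) = 0)].

Definition in_span (V : lmodType F) (s : seq V) (v : V) : Prop :=
  exists c : 'I_(size s) -> F, v = \sum_(i < size s) c i *: s`_i.

Definition finite_dim (V : lmodType F) : Prop :=
  exists s : seq V, forall v : V, in_span s v.

Definition infinite_dim (V : lmodType F) : Prop := ~ finite_dim V.

Definition is_ideal (V : lmodType F) (br : V -> V -> V) (I : V -> Prop) : Prop :=
  [/\ I 0,
      (forall x y, I x -> I y -> I (x + y)),
      (forall (a : F) x, I x -> I (a *: x)) &
      (forall x y, I x -> I (br x y))].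

Definition finite_codim (V : lmodType F) (I : V -> Prop) : Prop :=
  exists s : seq V, forall v : V,
    exists c : 'I_(size s) -> F, I (v - \sum_(i < size s) c i *: s`_i).

Definition just_infinite (V : lmodType F) (br : V -> V -> V) : Prop :=
  infinite_dim V /\
  forall I : V -> Prop, is_ideal br I -> (exists x, I x /\ x <> 0) ->
    finite_codim I.

Definition ad_nilpotent (V : lmodType F) (br : V -> V -> V) (a : V) : Prop :=
  exists n : nat, forall x : V, iter n (fun y => br y a) x = 0.

Inductive lie_set (V : lmodType F) (br : V -> V -> V) (m : nat) (a : 'I_m -> V)
  : V -> Prop :=
| lie_set_gen : forall i, lie_set br a (a i)
| lie_set_br : forall x y, lie_set br a x -> lie_set br a y -> lie_set br a (br x y).

Inductive lie_subalg (V : lmodType F) (br : V -> V -> V) (m : nat) (a : 'I_m -> V)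
  : V -> Prop :=
| lie_subalg_gen : forall i, lie_subalg br a (a i)
| lie_subalg_0 : lie_subalg br a 0
| lie_subalg_add : forall x y, lie_subalg br a x -> lie_subalg br a y ->
    lie_subalg br a (x + y)
| lie_subalg_scale : forall (c : F) x, lie_subalg br a x -> lie_subalg br a (c *: x)
| lie_subalg_br : forall x y, lie_subalg br a x -> lie_subalg br a y ->
    lie_subalg br a (br x y).

Definition lie_generated (V : lmodType F) (br : V -> V -> V) (m : nat)
  (a : 'I_m -> V) : Prop := forall v : V, lie_subalg br a v.

Definition lie_hom (V W : lmodType F) (brV : V -> V -> V) (brW : W -> W -> W)
  (f : V -> W) : Prop :=
  (forall (c : F) x y, f (c *: x + y) = c *: f x + f y) /\
  (forall x y, f (brV x y) = brW (f x) (f y)).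

Definition has_just_infinite_image (V : lmodType F) (br : V -> V -> V) : Prop :=
  exists (W : lmodType F) (brW : W -> W -> W) (f : V -> W),
    [/\ is_lie brW, lie_hom br brW f, (forall w, exists v, f v = w) &
        just_infinite brW].

End Lie.

(* By Zorn's lemma there is an ideal A of infinite codimension that is maximal
   among such ideals: a chain of ideals of infinite codimension has a union of
   infinite codimension because L is finitely generated, so finite
   codimension of an ideal C is witnessed by finitely many elements of C (the
   residues of the generators a_i and of the [s_j, a_i] modulo a finite list
   s), and these all lie in a single member of the chain. Ideals of L/A are
   preimages of ideals strictly containing A, so L/A is just infinite. *)
From HB Require Import structures.
From mathcomp Require Import all_boot all_order all_algebra.
From mathcomp Require Import boolp generic_quotient classical_sets.
Set Implicit Arguments. Unset Strict Implicit. Unset Printing Implicit Defensive.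
Import GRing.Theory.
Local Open Scope classical_set_scope.
Local Open Scope quotient_scope.
Local Open Scope ring_scope.

Section LieBracket.
Variables (F : fieldType) (L : lmodType F) (br : L -> L -> L).
Hypothesis Hlie : is_lie br.

Lemma brDl x y z : br (x + y) z = br x z + br y z.
Proof. by case: Hlie => linl _ _ _; have := linl 1 x y z; rewrite !scale1r. Qed.
Lemma brDr x y z : br z (x + y) = br z x + br z y.
Proof. by case: Hlie => _ linr _ _; have := linr 1 x y z; rewrite !scale1r. Qed.
Lemma br0l z : br 0 z = 0.
Proof. by apply: (addrI (br 0 z)); rewrite -brDl !addr0. Qed.
Lemma br0r z : br z 0 = 0.
Proof. by apply: (addrI (br z 0)); rewrite -brDr !addr0. Qed.
Lemma brZl c x z : br (c *: x) z = c *: br x z.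
Proof. by case: Hlie => linl _ _ _; have := linl c x 0 z; rewrite !addr0 br0l addr0. Qed.
Lemma brZr c x z : br z (c *: x) = c *: br z x.
Proof. by case: Hlie => _ linr _ _; have := linr c x 0 z; rewrite !addr0 br0r addr0. Qed.
Lemma brNl x z : br (- x) z = - br x z.
Proof. by rewrite -scaleN1r brZl scaleN1r. Qed.
Lemma brNr x z : br z (- x) = - br z x.
Proof. by rewrite -scaleN1r brZr scaleN1r. Qed.
Lemma brBl x y z : br (x - y) z = br x z - br y z.
Proof. by rewrite brDl brNl. Qed.
Lemma brBr x y z : br z (x - y) = br z x - br z y.
Proof. by rewrite brDr brNr. Qed.

Lemma br_suml I (r : seq I) (P : pred I) (f : I -> L) z :
  br (\sum_(i <- r | P i) f i) z = \sum_(i <- r | P i) br (f i) z.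
Proof. by apply: (big_morph (br^~ z)) => [x y|]; rewrite ?brDl ?br0l. Qed.

Lemma br_antisym x y : br x y = - br y x.
Proof.
case: Hlie => _ _ alt _; apply/eqP; rewrite -addr_eq0; apply/eqP.
by have := alt (x + y); rewrite brDl !brDr !alt add0r addr0.
Qed.

Lemma br_jacobi x y z : br x (br y z) = br (br x y) z - br (br x z) y.
Proof.
case: Hlie => _ _ _ jac; apply/eqP; rewrite -subr_eq0 opprB addrA.
rewrite (br_antisym (br x y)) (br_antisym (br x z)) (br_antisym x z) brNr.
by rewrite !opprK jac.
Qed.

End LieBracket.

Section Generation.
Variables (F : fieldType) (L : lmodType F) (br : L -> L -> L).
Hypothesis Hlie : is_lie br.
Variables (m : nat) (a : 'I_m -> L).

Inductive right_normed_span : L -> Prop :=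
| rns_gen i : right_normed_span (a i)
| rns0 : right_normed_span 0
| rnsD x y : right_normed_span x -> right_normed_span y -> right_normed_span (x + y)
| rnsZ (c : F) x : right_normed_span x -> right_normed_span (c *: x)
| rns_ad x i : right_normed_span x -> right_normed_span (br x (a i)).

Lemma right_normed_span_br y :
  right_normed_span y -> forall x, right_normed_span x -> right_normed_span (br x y).
Proof.
elim=> {y} [i||y1 y2 _ IH1 _ IH2|c y _ IH|y i _ IH] x hx.
- exact: rns_ad.
- by rewrite br0r //; apply: rns0.
- by rewrite brDr //; apply: rnsD; [apply: IH1 | apply: IH2].
- by rewrite brZr //; apply: rnsZ; apply: IH.
- rewrite br_jacobi // -scaleN1r.
  by apply: rnsD; [apply: rns_ad | apply: rnsZ]; apply: IH => //; apply: rns_ad.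
Qed.

Lemma lie_subalg_right_normed v : lie_subalg br a v -> right_normed_span v.
Proof.
elim=> {v} [i||x y _ ? _ ?|c x _ ?|x y _ ? _ ?].
- exact: rns_gen.
- exact: rns0.
- exact: rnsD.
- exact: rnsZ.
- exact: right_normed_span_br.
Qed.

Lemma lie_generated_ad_stable (P : L -> Prop) :
  lie_generated br a ->
  P 0 -> (forall x y, P x -> P y -> P (x + y)) -> (forall c x, P x -> P (c *: x)) ->
  (forall i, P (a i)) -> (forall x i, P x -> P (br x (a i))) ->
  forall v, P v.
Proof.
move=> gen P0 PD PZ Pa Pad v.
by elim: (lie_subalg_right_normed (gen v)) => *; auto.
Qed.

End Generation.

Section FiniteCodimension.
Variables (F : fieldType) (L : lmodType F) (br : L -> L -> L).
Hypothesis Hlie : is_lie br.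
Variables (C : L -> Prop) (s : seq L).
Hypothesis HC : is_ideal br C.

Definition span_mod (v : L) : Prop :=
  exists c : 'I_(size s) -> F, C (v - \sum_(k < size s) c k *: s`_k).

Lemma span_mod_ideal v : C v -> span_mod v.
Proof.
move=> Cv; exists (fun=> 0).
by rewrite big1 ?subr0 // => k _; rewrite scale0r.
Qed.

Lemma span_modD x y : span_mod x -> span_mod y -> span_mod (x + y).
Proof.
case: HC => _ CD _ _ [c1 h1] [c2 h2]; exists (fun k => c1 k + c2 k).
under eq_bigr do rewrite scalerDl.
by rewrite big_split opprD addrACA; apply: CD.
Qed.

Lemma span_modZ c x : span_mod x -> span_mod (c *: x).
Proof.
case: HC => _ _ CZ _ [c1 h1]; exists (fun k => c * c1 k).
under eq_bigr do rewrite -scalerA.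
by rewrite -scaler_sumr -scalerBr; apply: CZ.
Qed.

Lemma span_mod_lincomb n (c : 'I_n -> F) (u : 'I_n -> L) :
  (forall k, span_mod (u k)) -> span_mod (\sum_(k < n) c k *: u k).
Proof.
move=> hu; apply: (big_ind span_mod) => [||k _]; last exact/span_modZ/hu.
- by case: HC => C0 _ _ _; apply: span_mod_ideal.
- exact: span_modD.
Qed.

Lemma finite_codim_generated m (a : 'I_m -> L) :
  lie_generated br a ->
  (forall i, span_mod (a i)) -> (forall i (j : 'I_(size s)), span_mod (br s`_j (a i))) ->
  finite_codim C.
Proof.
case: HC => C0 _ _ CB gen Ha Hsa; exists s.
apply: (lie_generated_ad_stable Hlie gen) => //.
- exact: span_mod_ideal.
- exact: span_modD.
- exact: span_modZ.
move=> x i [c Cx]; rewrite -(subrK (\sum_(k < size s) c k *: s`_k) x).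
rewrite brDl // br_suml //; apply: span_modD; first exact/span_mod_ideal/CB.
under eq_bigr do rewrite brZl //.
exact: span_mod_lincomb.
Qed.

End FiniteCodimension.

Lemma chain_bigcup_seq (T : eqType) (Fm : set (set T)) (X0 : set T) :
  Fm X0 -> total_on Fm subset -> forall l : seq T,
  (forall y, y \in l -> (\bigcup_(X in Fm) X) y) ->
  exists2 X, Fm X & forall y, y \in l -> X y.
Proof.
move=> FX0 Ftot; elim=> [|y l IH] hl; first by exists X0.
have [X FX Xl] := IH (fun z zl => hl z (mem_behead (s := y :: l) zl)).
have [Y FY Yy] := hl y (mem_head _ _).
have [XY|YX] := Ftot X Y FX FY.
- by exists Y => // z; rewrite inE => /predU1P[->|/Xl/XY].
- by exists X => // z; rewrite inE => /predU1P[->|/Xl]; [apply: YX|].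
Qed.

Section Chains.
Variables (F : fieldType) (L : lmodType F) (br : L -> L -> L).
Hypothesis Hlie : is_lie br.
Variables (Fm : set (set L)) (X0 : set L).
Hypotheses (FmX0 : Fm X0) (Fm_ideal : forall X, Fm X -> is_ideal br X)
  (Fm_chain : total_on Fm subset).

Lemma bigcup_chain_ideal : is_ideal br (\bigcup_(X in Fm) X).
Proof.
split.
- by exists X0 => //; case: (Fm_ideal FmX0).
- move=> x y [X FX Xx] [Y FY Yy].
  have [Z FZ Zxy] : exists2 Z, Fm Z & forall z, z \in [:: x; y] -> Z z.
    apply: (chain_bigcup_seq FmX0 Fm_chain) => z.
    by rewrite !inE => /orP[]/eqP->; [exists X | exists Y].
  exists Z => //; case: (Fm_ideal FZ) => _ ZD _ _.
  by apply: ZD; apply: Zxy; rewrite !inE eqxx ?orbT.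
- by move=> c x [X FX Xx]; exists X => //; case: (Fm_ideal FX) => _ _ XZ _; apply: XZ.
- by move=> x y [X FX Xx]; exists X => //; case: (Fm_ideal FX) => _ _ _ XB; apply: XB.
Qed.

Lemma finite_codim_bigcup_chain m (a : 'I_m -> L) :
  lie_generated br a -> finite_codim (\bigcup_(X in Fm) X) ->
  exists2 X, Fm X & finite_codim X.
Proof.
move=> gen [s hs]; have [c hc] := choice hs.
pose res v := v - \sum_(k < size s) c v k *: s`_k.
pose l := [seq res (a i) | i : 'I_m] ++
          [seq res (br s`_ij.2 (a ij.1)) | ij : 'I_m * 'I_(size s)].
have [X FX Xl] : exists2 X, Fm X & forall y, y \in l -> X y.
  apply: (chain_bigcup_seq FmX0 Fm_chain) => y.
  by rewrite /l mem_cat => /orP[] /mapP [t _ ->]; apply: hc.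
exists X => //; apply: (finite_codim_generated Hlie (Fm_ideal FX) gen).
- move=> i; exists (c (a i)); apply: Xl; rewrite mem_cat; apply/orP; left.
  by apply/mapP; exists i; rewrite ?mem_enum.
- move=> i j; exists (c (br s`_j (a i))); apply: Xl; rewrite mem_cat; apply/orP; right.
  by apply/mapP; exists (i, j); rewrite ?mem_enum.
Qed.

End Chains.

Lemma finite_codim0 (F : fieldType) (L : lmodType F) :
  finite_codim [set 0 : L] -> finite_dim L.
Proof.
case=> s hs; exists s => v; have [c hc] := hs v.
by exists c; apply/eqP; rewrite -subr_eq0; apply/eqP.
Qed.

Section MaximalIdeal.
Variables (F : fieldType) (L : lmodType F) (br : L -> L -> L).
Hypothesis Hlie : is_lie br.

Lemma ideal0 : is_ideal br [set 0].
Proof.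
split=> // [x y -> ->|c x ->|x y ->]; by rewrite ?addr0 ?scaler0 ?br0l.
Qed.

(* The empty set is allowed so that the empty chain has an upper bound. *)
Let ideal_inf_codim0 (X : set L) := X = set0 \/ (is_ideal br X /\ ~ finite_codim X).

Let bigcup_chain_ideal_inf_codim0 m (a : 'I_m -> L) : lie_generated br a ->
  forall Fm : set (set L), Fm `<=` ideal_inf_codim0 -> total_on Fm subset ->
  ideal_inf_codim0 (\bigcup_(X in Fm) X).
Proof.
move=> gen Fm FmP Fm_chain.
pose Fm' := Fm `&` [set X | X 0].
have Fm'_chain : total_on Fm' subset by move=> X Y [FX _] [FY _]; apply: Fm_chain.
have Fm'_inf X : Fm' X -> is_ideal br X /\ ~ finite_codim X.
  by case=> /FmP[->|//] [].
have -> : \bigcup_(X in Fm) X = \bigcup_(X in Fm') X.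
  apply/seteqP; split=> x [X FX Xx]; last by exists X => //; case: FX.
  exists X => //; split=> //.
  by case: (FmP X FX) => [eX|[[]]] //; rewrite eX in Xx.
have [[X0 FmX0]|none] := pselect (exists X, Fm' X); last first.
  by left; apply/seteqP; split=> x // [X FX _]; apply: none; exists X.
have Fm'_ideal X : Fm' X -> is_ideal br X by case/Fm'_inf.
right; split; first exact: (bigcup_chain_ideal FmX0 Fm'_ideal).
by case/(finite_codim_bigcup_chain Hlie FmX0 Fm'_ideal Fm'_chain gen) => X /Fm'_inf[].
Qed.

Lemma exists_maximal_infinite_codim_ideal m (a : 'I_m -> L) :
  lie_generated br a -> infinite_dim L ->
  exists A, [/\ is_ideal br A, ~ finite_codim A &
    forall B, is_ideal br B -> A `<` B -> finite_codim B].
Proof.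
move=> gen Linf.
have [A [[A0|[Aideal Ainf]] Amax]] := Zorn_bigcup (bigcup_chain_ideal_inf_codim0 gen).
- exfalso; apply: (Amax [set 0]); last by right; split; [exact: ideal0 | move/finite_codim0].
  by rewrite A0; split=> // /(_ 0 erefl).
- exists A; split=> // B Bideal AB; apply: contrapT => Binf.
  by apply: (Amax B AB); right.
Qed.

End MaximalIdeal.

Lemma lincomb_map (F : fieldType) (V W : lmodType F) (f : W -> V) (s : seq W)
    (c : 'I_(size s) -> F) :
  exists c' : 'I_(size (map f s)) -> F,
    \sum_(k < size (map f s)) c' k *: (map f s)`_k = \sum_(k < size s) c k *: f s`_k.
Proof.
elim: s c => [|x s IH] c /=; first by exists (fun=> 0); rewrite !big_ord0.
have [c' Ec'] := IH (fun k => c (lift ord0 k)).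
exists (fun k => if unlift ord0 k is Some k' then c' k' else c ord0).
rewrite !big_ord_recl /= unlift_none -Ec'; congr (_ + _).
by apply: eq_bigr => k _; rewrite liftK.
Qed.

Section QuotientModule.
Variables (F : fieldType) (L : lmodType F) (A : L -> Prop).
Hypotheses (A0 : A 0) (AD : forall x y, A x -> A y -> A (x + y))
  (AZ : forall (c : F) x, A x -> A (c *: x)).

Let AN x : A x -> A (- x).
Proof. by rewrite -scaleN1r; apply: AZ. Qed.

Definition quot_rel : rel L := fun x y => `[< A (x - y) >].

Lemma quot_rel_refl : reflexive quot_rel.
Proof. by move=> x; apply/asboolP; rewrite subrr. Qed.
Lemma quot_rel_sym : symmetric quot_rel.
Proof. by move=> x y; apply/asboolP/asboolP => /AN; rewrite opprB. Qed.
Lemma quot_rel_trans : transitive quot_rel.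
Proof.
move=> y x z /asboolP Axy /asboolP Ayz; apply/asboolP.
by have := AD Axy Ayz; rewrite addrA subrK.
Qed.

Canonical quot_rel_equiv :=
  EquivRel quot_rel quot_rel_refl quot_rel_sym quot_rel_trans.

Definition quot := {eq_quot quot_rel}%qT.
HB.instance Definition _ := Choice.on quot.

Definition qpi (x : L) : quot := \pi_quot x.
Definition qrepr (u : quot) : L := repr u.

Lemma qpiE x y : qpi x = qpi y <-> A (x - y).
Proof.
split; first by move=> /eqP; rewrite /qpi eqmodE => /asboolP.
by move=> Axy; apply/eqmodP/asboolP.
Qed.

Lemma qreprK (u : quot) : qpi (qrepr u) = u.
Proof. exact: reprK. Qed.

Lemma qrepr_qpi x : A (qrepr (qpi x) - x).
Proof. by apply/qpiE; rewrite qreprK. Qed.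

Lemma quot_ind (P : quot -> Prop) : (forall x, P (qpi x)) -> forall u, P u.
Proof. by move=> Pqpi u; rewrite -(qreprK u). Qed.

Definition quot_add (u v : quot) : quot := qpi (qrepr u + qrepr v).
Definition quot_opp (u : quot) : quot := qpi (- qrepr u).
Definition quot_scale (c : F) (u : quot) : quot := qpi (c *: qrepr u).

Lemma quot_addE x y : quot_add (qpi x) (qpi y) = qpi (x + y).
Proof.
apply/qpiE; have := AD (qrepr_qpi x) (qrepr_qpi y).
by rewrite opprD addrACA.
Qed.
Lemma quot_oppE x : quot_opp (qpi x) = qpi (- x).
Proof. by apply/qpiE; have := AN (qrepr_qpi x); rewrite opprB addrC opprK. Qed.
Lemma quot_scaleE c x : quot_scale c (qpi x) = qpi (c *: x).
Proof. by apply/qpiE; have := AZ c (qrepr_qpi x); rewrite scalerBr. Qed.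

Lemma quot_addA : associative quot_add.
Proof. by do 3!elim/quot_ind=> ?; rewrite !quot_addE addrA. Qed.
Lemma quot_addC : commutative quot_add.
Proof. by do 2!elim/quot_ind=> ?; rewrite !quot_addE addrC. Qed.
Lemma quot_add0 : left_id (qpi 0) quot_add.
Proof. by elim/quot_ind=> x; rewrite quot_addE add0r. Qed.
Lemma quot_addN : left_inverse (qpi 0) quot_opp quot_add.
Proof. by elim/quot_ind=> x; rewrite quot_oppE quot_addE addNr. Qed.

HB.instance Definition _ :=
  GRing.isZmodule.Build quot quot_addA quot_addC quot_add0 quot_addN.

Let qpiD x y : qpi x + qpi y = qpi (x + y).
Proof. exact: quot_addE. Qed.

Lemma quot_scaleA a b u : quot_scale a (quot_scale b u) = quot_scale (a * b) u.
Proof. by elim/quot_ind: u => x; rewrite !quot_scaleE scalerA. Qed.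
Lemma quot_scale1 : left_id 1 quot_scale.
Proof. by elim/quot_ind=> x; rewrite quot_scaleE scale1r. Qed.
Lemma quot_scaleDr : right_distributive quot_scale +%R.
Proof.
by move=> c; do 2!elim/quot_ind=> ?; rewrite qpiD !quot_scaleE qpiD scalerDr.
Qed.
Lemma quot_scaleDl u : {morph quot_scale^~ u : a b / a + b}.
Proof.
by elim/quot_ind: u => x a b; rewrite !quot_scaleE qpiD scalerDl.
Qed.

HB.instance Definition _ := GRing.Zmodule_isLmodule.Build F quot
  quot_scaleA quot_scale1 quot_scaleDr quot_scaleDl.

Lemma qpi_is_linear : linear qpi.
Proof. by move=> c x y; rewrite -qpiD -quot_scaleE. Qed.

HB.instance Definition _ := GRing.isLinear.Build F L quot _ qpi qpi_is_linear.

End QuotientModule.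

Section QuotientLie.
Variables (F : fieldType) (L : lmodType F) (br : L -> L -> L).
Hypothesis Hlie : is_lie br.
Variable A : L -> Prop.
Hypothesis HA : is_ideal br A.

Let A0 : A 0. Proof. by case: HA. Qed.
Let AD x y : A x -> A y -> A (x + y). Proof. by case: HA => _ AD _ _; apply: AD. Qed.
Let AZ c x : A x -> A (c *: x). Proof. by case: HA => _ _ AZ _; apply: AZ. Qed.

Local Notation Q := (quot A0 AD AZ).
Local Notation qpi := (qpi A0 AD AZ).
Local Notation qrepr := (@qrepr _ _ _ A0 AD AZ).

Definition quot_br (u v : Q) : Q := qpi (br (qrepr u) (qrepr v)).

(* [A] is only a right ideal by definition; antisymmetry makes it two-sided. *)
Lemma ideal_br_congr x x' y y' :
  A (x - x') -> A (y - y') -> A (br x y - br x' y').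
Proof.
case: HA => _ _ _ AB Ax Ay.
have -> : br x y - br x' y' = br (x - x') y + (- 1) *: br (y - y') x'.
  by rewrite brBl // scaleN1r (br_antisym _ (y - y')) // opprK brBr // addrA subrK.
by apply: AD; [apply: AB | apply/AZ/AB].
Qed.

Lemma quot_brE x y : quot_br (qpi x) (qpi y) = qpi (br x y).
Proof. by apply/qpiE; apply: ideal_br_congr; apply: qrepr_qpi. Qed.

Lemma quot_is_lie : is_lie quot_br.
Proof.
case: Hlie => linl linr alt jac; split.
- move=> c; do 3!elim/quot_ind=> ?.
  by rewrite -linearP !quot_brE linl linearP.
- move=> c; do 3!elim/quot_ind=> ?.
  by rewrite -linearP !quot_brE linr linearP.
- by elim/quot_ind=> x; rewrite quot_brE alt linear0.
- elim/quot_ind=> x; elim/quot_ind=> y; elim/quot_ind=> z.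
  by rewrite -(linear0 qpi) -(jac x y z) !linearD !quot_brE.
Qed.

Lemma qpi_lie_hom : lie_hom br quot_br qpi.
Proof. by split=> [c x y|x y]; rewrite ?linearP ?quot_brE. Qed.

Lemma qpi_surj (u : Q) : exists x, qpi x = u.
Proof. by exists (qrepr u); apply: qreprK. Qed.

Lemma quot_finite_dim : finite_dim Q -> finite_codim A.
Proof.
case=> s hs; exists (map qrepr s) => x; have [c Ex] := hs (qpi x).
have [c' Ec'] := lincomb_map qrepr c; exists c'; rewrite Ec'.
apply/qpiE; rewrite Ex linear_sum; apply: eq_bigr => k _.
by rewrite linearZ /= qreprK.
Qed.

Lemma ideal_preimage (K : Q -> Prop) :
  is_ideal quot_br K -> is_ideal br (fun x => K (qpi x)).
Proof.
case=> K0 KD KZ KB; split=> [|x y|c x|x y]; rewrite ?linear0 ?linearD ?linearZ //.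
- exact: KD.
- exact: KZ.
- by rewrite -quot_brE; apply: KB.
Qed.

Lemma finite_codim_preimage (K : Q -> Prop) :
  finite_codim (fun x => K (qpi x)) -> finite_codim K.
Proof.
case=> s hs; exists (map qpi s); elim/quot_ind=> x; have [c Kx] := hs x.
have [c' Ec'] := lincomb_map qpi c; exists c'; rewrite Ec'.
by under eq_bigr do rewrite -linearZ; rewrite -linear_sum -linearB.
Qed.

Lemma quot_just_infinite :
  ~ finite_codim A -> (forall B, is_ideal br B -> A `<` B -> finite_codim B) ->
  just_infinite quot_br.
Proof.
move=> Ainf Amax; split; first by move/quot_finite_dim.
move=> K HK [u [Ku u0]]; apply/finite_codim_preimage/Amax; first exact: ideal_preimage.
split=> [x Ax|AK].
  have -> : qpi x = qpi 0 by apply/qpiE; rewrite subr0.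
  by rewrite linear0; case: HK.
apply: u0; rewrite -(qreprK u) -(linear0 qpi); apply/qpiE; rewrite subr0.
by apply: AK; rewrite qreprK.
Qed.

End QuotientLie.

Theorem lemma4 (F : fieldType) (L : lmodType F) (br : L -> L -> L)
  (m : nat) (a : 'I_m -> L) :
  is_lie br ->
  infinite_dim L ->
  lie_generated br a ->
  (forall x : L, lie_set br a x -> ad_nilpotent br x) ->
  has_just_infinite_image br.
Proof.
(* Finite generation suffices. *)
move=> Hlie Linf gen _.
have [A [HA Ainf Amax]] := exists_maximal_infinite_codim_ideal Hlie gen Linf.
exists _, (quot_br (HA := HA)), (qpi _ _ _); split.
- exact: quot_is_lie.
- exact: qpi_lie_hom.
- exact: qpi_surj.
- exact: quot_just_infinite.
Qed.
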